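(* Let $\mathbf{x}$ be a probability vector for $S$ and define $W_{\rm det}=\sup\{W\in\mathbb{R}:\ \mathbf{x}\otimes(1,0)\succ_g\mathbf{g}\otimes(0,1)\text{ with respect to }H_{SW}(W)\}$. Then the supremum is attained and $$W_{\rm det}=-kT\log\sum_{i:\,x_i\ne0}g_i.$$
   Context: $S$ has Hamiltonian $H_S=\sum_{i=1}^nE_i|i\rangle\langle i|$, $\beta=1/(kT)>0$, $Z_S=\sum_ie^{-\beta E_i}$, Gibbs vector $g_i=e^{-\beta E_i}/Z_S$. The battery is a two-level system with Hamiltonian $W|1\rangle\langle1|$ and $H_{SW}(W)=H_S\otimes\mathbb{I}+\mathbb{I}\otimes W|1\rangle\langle1|$; $\mathbf{x}\otimes(1,0)$ denotes the product distribution with battery in $|0\rangle$, and $\mathbf{g}\otimes(0,1)$ with battery in $|1\rangle$. Thermo-majorisation for a Hamiltonian $H$ with eigenvalues $\epsilon_1,\dots,\epsilon_m$ and $Z=\sum_je^{-\beta\epsilon_j}$: for a probability vector $\mathbf{u}$ let $\pi$ order $u_{\pi(1)}e^{\beta\epsilon_{\pi(1)}}\ge\dots\ge u_{\pi(m)}e^{\beta\epsilon_{\pi(m)}}$; the curve $T(\mathbf{u})$ is the piecewise linear function on $[0,Z]$ joining the origin and $\big(\sum_{j\le k}e^{-\beta\epsilon_{\pi(j)}},\sum_{j\le k}u_{\pi(j)}\big)$, $k=1,\dots,m$; $\mathbf{u}\succ_g\mathbf{v}$ iff $T(\mathbf{u})\ge T(\mathbf{v})$ pointwise. *)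

From Stdlib Require Import Reals Lra List Sorting.Sorted Sorting.Permutation.
Open Scope R_scope.

Definition Rsum_list (l : list R) : R := fold_right Rplus 0 l.

Definition Rsum_upto (m : nat) (f : nat -> R) : R := Rsum_list (map f (seq 0 m)).

Definition partition (beta : R) (m : nat) (eps : nat -> R) : R :=
  Rsum_upto m (fun j => exp (- beta * eps j)).

Definition beta_ordering (beta : R) (m : nat) (eps u : nat -> R) (l : list nat) : Prop :=
  Permutation l (seq 0 m) /\
  Sorted (fun a b => u b * exp (beta * eps b) <= u a * exp (beta * eps a)) l.

(* The piecewise linear curve joining the origin and the points
   (sum_{j<=k} e^{-beta eps_{pi(j)}}, sum_{j<=k} u_{pi(j)}), evaluated at t
   (meaningful for 0 <= t <= Z). *)
Fixpoint thermo_curve (beta : R) (eps u : nat -> R) (l : list nat) (t : R) : R :=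
  match l with
  | nil => 0
  | j :: l' =>
      let w := exp (- beta * eps j) in
      if Rle_dec t w then (t / w) * u j
      else u j + thermo_curve beta eps u l' (t - w)
  end.

(* The curve does not
   depend on how ties are broken in the ordering; we quantify over all
   valid orderings (which always exist). *)
Definition thermo_majorises (beta : R) (m : nat) (eps u v : nat -> R) : Prop :=
  forall lu lv : list nat,
    beta_ordering beta m eps u lu ->
    beta_ordering beta m eps v lv ->
    forall t, 0 <= t <= partition beta m eps ->
      thermo_curve beta eps v lv t <= thermo_curve beta eps u lu t.

Definition gibbs (beta : R) (n : nat) (E : nat -> R) (i : nat) : R :=
  exp (- beta * E i) / partition beta n E.

(* Joint system S (x) battery, 2n levels: index k < n is |k>|0>,
   index n + i is |i>|1>. Energies of H_SW(W). *)
Definition energy_SW (n : nat) (E : nat -> R) (W : R) (k : nat) : R :=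
  if Nat.ltb k n then E k else E (k - n)%nat + W.

Definition tensor_bat0 (n : nat) (x : nat -> R) (k : nat) : R :=
  if Nat.ltb k n then x k else 0.

Definition tensor_bat1 (n : nat) (y : nat -> R) (k : nat) : R :=
  if Nat.ltb k n then 0 else y (k - n)%nat.

Definition is_prob_vector (n : nat) (x : nat -> R) : Prop :=
  (forall i, (i < n)%nat -> 0 <= x i) /\ Rsum_upto n x = 1.

Definition det_work_set (beta : R) (n : nat) (E x : nat -> R) (W : R) : Prop :=
  thermo_majorises beta (2 * n) (energy_SW n E W)
    (tensor_bat0 n x) (tensor_bat1 n (gibbs beta n E)).

From Pilot Require Import Defs.
From Stdlib Require Import Reals Lra Lia List Sorting.Sorted Sorting.Permutation.
Open Scope R_scope.

(* The thermo-majorisation curve of a nonnegative vector is concave, and it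
   reaches its total mass at the Boltzmann weight A of the support of the vector.
   For x (x) (1,0) the total mass is 1 and A = P := sum_{x_i <> 0} e^{-beta E_i},
   so its curve lies above min(t / P, 1).  The curve of g (x) (0,1) is the line of
   slope e^{beta W} / Z_S up to A = Z_S e^{-beta W}, then flat at height 1.
   Hence x (x) (1,0) thermo-majorises g (x) (0,1) exactly when P <= Z_S e^{-beta W},
   i.e. when W <= -kT log (P / Z_S), and this bound is attained. *)

Local Notation boltz beta eps := (fun j => exp (- beta * eps j)).
(* [u j * exp (beta * eps j)] is the slope of the curve on the segment of item [j]. *)
Local Notation slope_ge beta eps u :=
  (fun a b => u b * exp (beta * eps b) <= u a * exp (beta * eps a)).

Definition lsum (l : list nat) (f : nat -> R) : R := Rsum_list (map f l).

Lemma lsum_nil f : lsum nil f = 0.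
Proof. reflexivity. Qed.

Lemma lsum_cons j l f : lsum (j :: l) f = f j + lsum l f.
Proof. reflexivity. Qed.

Lemma lsum_app l1 l2 f : lsum (l1 ++ l2) f = lsum l1 f + lsum l2 f.
Proof.
  induction l1 as [|j l1 IH]; simpl app; rewrite ?lsum_cons, ?lsum_nil, ?IH; ring.
Qed.

Lemma lsum_ext l f g : (forall j, In j l -> f j = g j) -> lsum l f = lsum l g.
Proof.
  induction l as [|j l IH]; intros Hfg; [reflexivity|].
  rewrite !lsum_cons, (Hfg j), IH; [reflexivity | | left]; auto.
  intros k Hk; apply Hfg; right; exact Hk.
Qed.

Lemma lsum_perm l l' f : Permutation l l' -> lsum l f = lsum l' f.
Proof.
  induction 1; rewrite ?lsum_cons; try congruence; ring.
Qed.

Lemma lsum_scal l c f : lsum l (fun j => c * f j) = c * lsum l f.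
Proof.
  induction l as [|j l IH]; rewrite ?lsum_nil, ?lsum_cons, ?IH; ring.
Qed.

Lemma lsum_zero l : lsum l (fun _ => 0) = 0.
Proof. induction l as [|j l IH]; rewrite ?lsum_nil, ?lsum_cons, ?IH; ring. Qed.

Lemma lsum_nonneg l f : (forall j, In j l -> 0 <= f j) -> 0 <= lsum l f.
Proof.
  induction l as [|j l IH]; intros Hf; rewrite ?lsum_nil, ?lsum_cons; [lra|].
  assert (0 <= f j) by (apply Hf; simpl; auto).
  assert (0 <= lsum l f) by (apply IH; intros; apply Hf; simpl; auto).
  lra.
Qed.

Lemma lsum_seq_shift f m a b :
  lsum (seq (a + b) m) f = lsum (seq b m) (fun i => f (a + i)%nat).
Proof.
  revert b; induction m as [|m IH]; intros b; [reflexivity|].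
  cbn [seq]; rewrite !lsum_cons, <- IH, Nat.add_succ_r; reflexivity.
Qed.

Lemma lsum_seq_double n f :
  lsum (seq 0 (2 * n)) f = lsum (seq 0 n) f + lsum (seq 0 n) (fun i => f (n + i)%nat).
Proof.
  replace (2 * n)%nat with (n + n)%nat by lia.
  rewrite seq_app, lsum_app, <- lsum_seq_shift, Nat.add_0_r; reflexivity.
Qed.

Definition support_weight (u w : nat -> R) (l : list nat) : R :=
  lsum l (fun j => if Req_EM_T (u j) 0 then 0 else w j).

Lemma support_weight_cons u w j l :
  support_weight u w (j :: l) = (if Req_EM_T (u j) 0 then 0 else w j) + support_weight u w l.
Proof. reflexivity. Qed.

Lemma support_weight_nonneg u w l : (forall j, 0 < w j) -> 0 <= support_weight u w l.
Proof.
  intros Hw; apply lsum_nonneg; intros j _.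
  destruct Req_EM_T; [lra | apply Rlt_le, Hw].
Qed.

Lemma lsum_pos_of_support_weight_pos u w l :
  (forall j, In j l -> 0 <= u j) -> 0 < support_weight u w l -> 0 < lsum l u.
Proof.
  induction l as [|j l IH]; intros Hu HA; [unfold support_weight in HA; rewrite lsum_nil in HA; lra|].
  rewrite support_weight_cons in HA; rewrite lsum_cons.
  assert (Hl : forall k, In k l -> 0 <= u k) by (intros; apply Hu; simpl; auto).
  assert (0 <= u j) by (apply Hu; simpl; auto).
  pose proof (lsum_nonneg l u Hl).
  destruct Req_EM_T as [e|ne].
  - rewrite e; assert (0 < lsum l u) by (apply IH; auto; lra); lra.
  - lra.
Qed.

Lemma support_weight_pos_of_lsum_pos u w l : (forall j, 0 < w j) ->
  (forall j, In j l -> 0 <= u j) -> 0 < lsum l u -> 0 < support_weight u w l.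
Proof.
  intros Hw; induction l as [|j l IH]; intros Hu HU; [rewrite lsum_nil in HU; lra|].
  rewrite support_weight_cons; rewrite lsum_cons in HU.
  assert (Hl : forall k, In k l -> 0 <= u k) by (intros; apply Hu; simpl; auto).
  pose proof (support_weight_nonneg u w l Hw).
  destruct Req_EM_T as [e|ne].
  - rewrite e in HU; assert (0 < support_weight u w l) by (apply IH; auto; lra); lra.
  - pose proof (Hw j); lra.
Qed.

Lemma slope_mul_weight beta e a : a = a * exp (beta * e) * exp (- beta * e).
Proof.
  rewrite Rmult_assoc, <- exp_plus.
  replace (beta * e + - beta * e) with 0 by ring; rewrite exp_0; ring.
Qed.

Lemma lsum_le_slope_mul beta eps u l s :
  (forall k, In k l -> u k * exp (beta * eps k) <= s) ->
  lsum l u <= s * support_weight u (boltz beta eps) l.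
Proof.
  induction l as [|k l IH]; intros Hs; [unfold support_weight; rewrite !lsum_nil; lra|].
  rewrite lsum_cons, support_weight_cons.
  assert (IHl : lsum l u <= s * support_weight u (boltz beta eps) l)
    by (apply IH; intros; apply Hs; simpl; auto).
  assert (Hk : u k * exp (beta * eps k) <= s) by (apply Hs; simpl; auto).
  destruct Req_EM_T as [e|ne]; [rewrite e; lra|].
  pose proof (exp_pos (- beta * eps k)); rewrite (slope_mul_weight beta (eps k) (u k)) at 1.
  nra.
Qed.

Lemma thermo_curve_cons_le beta eps u j l t : t <= exp (- beta * eps j) ->
  thermo_curve beta eps u (j :: l) t = t / exp (- beta * eps j) * u j.
Proof. intros H; cbn [thermo_curve]; destruct Rle_dec; [reflexivity | contradiction]. Qed.

Lemma thermo_curve_cons_gt beta eps u j l t : exp (- beta * eps j) < t ->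
  thermo_curve beta eps u (j :: l) t
  = u j + thermo_curve beta eps u l (t - exp (- beta * eps j)).
Proof. intros H; cbn [thermo_curve]; destruct Rle_dec; [lra | reflexivity]. Qed.

Lemma Rdiv_unit_interval t w : 0 < w -> 0 <= t <= w ->
  0 <= t / w <= 1 /\ t / w * w = t.
Proof.
  intros Hw Ht.
  assert (Hq : t / w * w = t) by (field; lra).
  assert (0 <= t / w) by (unfold Rdiv; apply Rmult_le_pos; [lra | apply Rlt_le, Rinv_0_lt_compat, Hw]).
  repeat split; nra.
Qed.

Section ThermoCurve.

Variables (beta : R) (eps u : nat -> R).

Lemma thermo_curve_nonneg l : (forall j, In j l -> 0 <= u j) ->
  forall t, 0 <= t -> 0 <= thermo_curve beta eps u l t.
Proof.
  induction l as [|j l IH]; intros Hu t Ht; [simpl; lra|].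
  assert (Hl : forall k, In k l -> 0 <= u k) by (intros; apply Hu; simpl; auto).
  assert (0 <= u j) by (apply Hu; simpl; auto).
  pose proof (exp_pos (- beta * eps j)) as Hw.
  destruct (Rle_dec t (exp (- beta * eps j))) as [h|h].
  - rewrite thermo_curve_cons_le by exact h.
    destruct (Rdiv_unit_interval t _ Hw (conj Ht h)); nra.
  - rewrite thermo_curve_cons_gt by lra.
    pose proof (IH Hl (t - exp (- beta * eps j)) ltac:(lra)); lra.
Qed.

Lemma thermo_curve_le_mul l c : 0 <= c ->
  (forall j, In j l -> u j <= c * exp (- beta * eps j)) ->
  forall t, 0 <= t -> thermo_curve beta eps u l t <= c * t.
Proof.
  intros Hc; induction l as [|j l IH]; intros Hu t Ht; [simpl; nra|].
  assert (Hl : forall k, In k l -> u k <= c * exp (- beta * eps k))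
    by (intros; apply Hu; simpl; auto).
  assert (u j <= c * exp (- beta * eps j)) by (apply Hu; simpl; auto).
  pose proof (exp_pos (- beta * eps j)) as Hw.
  destruct (Rle_dec t (exp (- beta * eps j))) as [h|h].
  - rewrite thermo_curve_cons_le by exact h.
    destruct (Rdiv_unit_interval t _ Hw (conj Ht h)); nra.
  - rewrite thermo_curve_cons_gt by lra.
    pose proof (IH Hl (t - exp (- beta * eps j)) ltac:(lra)); nra.
Qed.

Lemma thermo_curve_le_lsum l : (forall j, In j l -> 0 <= u j) ->
  forall t, 0 <= t -> thermo_curve beta eps u l t <= lsum l u.
Proof.
  induction l as [|j l IH]; intros Hu t Ht; [simpl; rewrite lsum_nil; lra|].
  assert (Hl : forall k, In k l -> 0 <= u k) by (intros; apply Hu; simpl; auto).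
  assert (0 <= u j) by (apply Hu; simpl; auto).
  rewrite lsum_cons; pose proof (lsum_nonneg l u Hl).
  pose proof (exp_pos (- beta * eps j)) as Hw.
  destruct (Rle_dec t (exp (- beta * eps j))) as [h|h].
  - rewrite thermo_curve_cons_le by exact h.
    destruct (Rdiv_unit_interval t _ Hw (conj Ht h)); nra.
  - rewrite thermo_curve_cons_gt by lra.
    pose proof (IH Hl (t - exp (- beta * eps j)) ltac:(lra)); lra.
Qed.

Lemma thermo_curve_lt_lsum l : (forall j, In j l -> 0 <= u j) ->
  forall t, 0 <= t -> t < support_weight u (boltz beta eps) l ->
  thermo_curve beta eps u l t < lsum l u.
Proof.
  induction l as [|j l IH]; intros Hu t Ht HA;
    [unfold support_weight in HA; rewrite lsum_nil in HA; lra|].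
  assert (Hl : forall k, In k l -> 0 <= u k) by (intros; apply Hu; simpl; auto).
  assert (0 <= u j) by (apply Hu; simpl; auto).
  rewrite lsum_cons; rewrite support_weight_cons in HA.
  pose proof (support_weight_nonneg u (boltz beta eps) l (fun k => exp_pos _)).
  pose proof (exp_pos (- beta * eps j)) as Hw.
  destruct (Rle_dec t (exp (- beta * eps j))) as [h|h].
  - rewrite thermo_curve_cons_le by exact h.
    destruct (Rdiv_unit_interval t _ Hw (conj Ht h)) as [[q0 q1] _].
    destruct (Rlt_or_le 0 (support_weight u (boltz beta eps) l)) as [hp|hp].
    + pose proof (lsum_pos_of_support_weight_pos u (boltz beta eps) l Hl hp); nra.
    + destruct Req_EM_T as [e|ne]; [lra|].
      assert (t / exp (- beta * eps j) < 1).
      { apply Rmult_lt_reg_r with (exp (- beta * eps j)); [exact Hw|].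
        unfold Rdiv; rewrite Rmult_assoc, Rinv_l; lra. }
      pose proof (lsum_nonneg l u Hl); nra.
  - rewrite thermo_curve_cons_gt by lra.
    assert (Hrest : t - exp (- beta * eps j) < support_weight u (boltz beta eps) l)
      by (destruct Req_EM_T; lra).
    pose proof (IH Hl (t - exp (- beta * eps j)) ltac:(lra) Hrest); lra.
Qed.

Section Sorted.

Variables (j : nat) (l : list nat).
Hypothesis Hslope : Forall (fun k => slope_ge beta eps u j k) l.
Hypothesis Hu : forall k, In k (j :: l) -> 0 <= u k.

Let s := u j * exp (beta * eps j).

Lemma lsum_tail_le_slope_mul : lsum l u <= s * support_weight u (boltz beta eps) l.
Proof. apply lsum_le_slope_mul, Forall_forall, Hslope. Qed.

Lemma lsum_tail_zero_of_head_zero : u j = 0 -> lsum l u = 0.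
Proof.
  intros H0; pose proof lsum_tail_le_slope_mul as Hle.
  unfold s in Hle; rewrite H0, Rmult_0_l, Rmult_0_l in Hle.
  pose proof (lsum_nonneg l u (fun k Hk => Hu k (or_intror Hk))); lra.
Qed.

End Sorted.

(* Sortedness by slope makes the curve concave: it lies above its chord from
   the origin to the point (A, U), where U is the total mass and A the Boltzmann
   weight of the support, and it is flat at height U after A. *)
Lemma thermo_curve_ge_lsum l :
  StronglySorted (slope_ge beta eps u) l -> (forall j, In j l -> 0 <= u j) ->
  forall t, 0 <= t -> support_weight u (boltz beta eps) l <= t ->
  lsum l u <= thermo_curve beta eps u l t.
Proof.
  induction l as [|j l IH]; intros Hs Hu t Ht HA; [simpl; rewrite lsum_nil; lra|].
  inversion Hs as [|? ? Hs' Hslope]; subst.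
  assert (Hl : forall k, In k l -> 0 <= u k) by (intros; apply Hu; simpl; auto).
  pose proof (thermo_curve_nonneg (j :: l) Hu t Ht).
  rewrite lsum_cons; rewrite support_weight_cons in HA.
  destruct Req_EM_T as [e|ne].
  { rewrite e, (lsum_tail_zero_of_head_zero j l Hslope Hu e); lra. }
  pose proof (support_weight_nonneg u (boltz beta eps) l (fun k => exp_pos _)).
  pose proof (exp_pos (- beta * eps j)) as Hw.
  destruct (Rle_dec t (exp (- beta * eps j))) as [h|h].
  - rewrite thermo_curve_cons_le by exact h.
    assert (HA0 : support_weight u (boltz beta eps) l = 0) by lra.
    pose proof (lsum_tail_le_slope_mul j l Hslope) as Hle; rewrite HA0 in Hle.
    pose proof (lsum_nonneg l u Hl).
    destruct (Rdiv_unit_interval t _ Hw (conj Ht h)) as [_ Hq].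
    assert (t / exp (- beta * eps j) = 1) by nra.
    nra.
  - rewrite thermo_curve_cons_gt by lra.
    pose proof (IH Hs' Hl (t - exp (- beta * eps j)) ltac:(lra) ltac:(lra)); lra.
Qed.

Lemma thermo_curve_ge_chord l :
  StronglySorted (slope_ge beta eps u) l -> (forall j, In j l -> 0 <= u j) ->
  forall t, 0 <= t -> t <= support_weight u (boltz beta eps) l ->
  t * lsum l u <= thermo_curve beta eps u l t * support_weight u (boltz beta eps) l.
Proof.
  induction l as [|j l IH]; intros Hs Hu t Ht HA;
    [simpl; unfold support_weight; rewrite !lsum_nil; lra|].
  inversion Hs as [|? ? Hs' Hslope]; subst.
  assert (Hl : forall k, In k l -> 0 <= u k) by (intros; apply Hu; simpl; auto).
  pose proof (thermo_curve_nonneg (j :: l) Hu t Ht).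
  pose proof (support_weight_nonneg u (boltz beta eps) l (fun k => exp_pos _)).
  rewrite lsum_cons, support_weight_cons; rewrite support_weight_cons in HA.
  destruct Req_EM_T as [e|ne].
  { rewrite e, (lsum_tail_zero_of_head_zero j l Hslope Hu e); nra. }
  set (A' := support_weight u (boltz beta eps) l) in *.
  set (w := exp (- beta * eps j)) in *.
  set (s := u j * exp (beta * eps j)).
  pose proof (lsum_tail_le_slope_mul j l Hslope) as Hle; fold A' s in Hle.
  pose proof (slope_mul_weight beta (eps j) (u j)) as Hus; fold w s in Hus.
  assert (0 < u j) by (assert (0 <= u j) by (apply Hu; simpl; auto); lra).
  assert (Hw : 0 < w) by apply exp_pos.
  assert (0 < s) by nra.
  destruct (Rle_dec t w) as [h|h].
  - rewrite thermo_curve_cons_le by exact h; fold w.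
    destruct (Rdiv_unit_interval t _ Hw (conj Ht h)) as [_ Hq].
    assert (Hline : t / w * u j = s * t) by (rewrite Hus; field; lra).
    assert (0 <= t * (s * A' - lsum l u)) by (apply Rmult_le_pos; lra).
    rewrite Hline, Hus; lra.
  - rewrite thermo_curve_cons_gt by exact (Rnot_le_lt _ _ h); fold w.
    set (tau := t - w).
    specialize (IH Hs' Hl tau ltac:(unfold tau; lra) ltac:(unfold tau; lra)); fold A' in IH.
    set (T' := thermo_curve beta eps u l tau) in *.
    (* after scaling by A', the claim reduces to w (A' - tau) (s A' - U') >= 0 *)
    assert (0 < A') by (unfold tau in *; lra).
    apply Rmult_le_reg_l with A'; [lra|].
    assert (K1 : tau * lsum l u * (w + A') <= T' * A' * (w + A'))
      by (apply Rmult_le_compat_r; lra).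
    assert (K2 : 0 <= w * (A' - tau) * (s * A' - lsum l u))
      by (apply Rmult_le_pos; [apply Rmult_le_pos|]; unfold tau in *; lra).
    replace t with (w + tau) by (unfold tau; ring).
    rewrite Hus; nra.
Qed.

End ThermoCurve.

Fixpoint insert_desc (f : nat -> R) (a : nat) (l : list nat) : list nat :=
  match l with
  | nil => a :: nil
  | b :: l' => if Rle_dec (f b) (f a) then a :: l else b :: insert_desc f a l'
  end.

Lemma insert_desc_perm f a l : Permutation (insert_desc f a l) (a :: l).
Proof.
  induction l as [|b l IH]; simpl; [auto|].
  destruct Rle_dec; [auto|].
  eapply perm_trans; [apply perm_skip, IH | apply perm_swap].
Qed.

Lemma insert_desc_sorted f a l :
  Sorted (fun x y => f y <= f x) l -> Sorted (fun x y => f y <= f x) (insert_desc f a l).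
Proof.
  induction l as [|b l IH]; intros Hl; simpl; [auto|].
  apply Sorted_inv in Hl as [Hl Hb].
  destruct Rle_dec as [r|r]; [constructor; auto|].
  constructor; [auto|].
  destruct l as [|c l]; simpl; [constructor; lra|].
  inversion Hb; destruct Rle_dec; constructor; lra.
Qed.

Lemma sorted_desc_perm_exists (f : nat -> R) (l : list nat) :
  exists l', Permutation l' l /\ Sorted (fun x y => f y <= f x) l'.
Proof.
  induction l as [|a l [l' [Hp Hs]]]; [exists nil; auto|].
  exists (insert_desc f a l'); split.
  - eapply perm_trans; [apply insert_desc_perm | apply perm_skip, Hp].
  - apply insert_desc_sorted, Hs.
Qed.

Lemma beta_ordering_exists beta m eps u : exists l, beta_ordering beta m eps u l.
Proof. apply (sorted_desc_perm_exists (fun k => u k * exp (beta * eps k))). Qed.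

Lemma beta_ordering_strongly_sorted beta m eps u l :
  beta_ordering beta m eps u l -> StronglySorted (slope_ge beta eps u) l.
Proof. intros [_ Hs]; apply Sorted_StronglySorted; [intros a b c; lra | exact Hs]. Qed.

Section JointSystem.

Variables (n : nat) (E : nat -> R).

Lemma ltb_lo i : (i < n)%nat -> Nat.ltb i n = true.
Proof. apply Nat.ltb_lt. Qed.

Lemma ltb_hi i : Nat.ltb (n + i) n = false.
Proof. apply Nat.ltb_ge; lia. Qed.

Lemma energy_SW_lo W i : (i < n)%nat -> energy_SW n E W i = E i.
Proof. intros Hi; unfold energy_SW; rewrite ltb_lo; auto. Qed.

Lemma energy_SW_hi W i : energy_SW n E W (n + i) = E i + W.
Proof. unfold energy_SW; rewrite ltb_hi, Nat.add_sub_swap, Nat.sub_diag; auto. Qed.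

Lemma boltz_energy_SW_hi beta W i :
  exp (- beta * energy_SW n E W (n + i)) = exp (- beta * W) * exp (- beta * E i).
Proof. rewrite energy_SW_hi, <- exp_plus; f_equal; ring. Qed.

Lemma tensor_bat0_lo x i : (i < n)%nat -> tensor_bat0 n x i = x i.
Proof. intros Hi; unfold tensor_bat0; rewrite ltb_lo; auto. Qed.

Lemma tensor_bat0_hi x i : tensor_bat0 n x (n + i) = 0.
Proof. unfold tensor_bat0; rewrite ltb_hi; auto. Qed.

Lemma tensor_bat1_lo y i : (i < n)%nat -> tensor_bat1 n y i = 0.
Proof. intros Hi; unfold tensor_bat1; rewrite ltb_lo; auto. Qed.

Lemma tensor_bat1_hi y i : tensor_bat1 n y (n + i) = y i.
Proof. unfold tensor_bat1; rewrite ltb_hi, Nat.add_sub_swap, Nat.sub_diag; auto. Qed.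

Lemma lsum_seq_ext f g :
  (forall i, (i < n)%nat -> f i = g i) -> lsum (seq 0 n) f = lsum (seq 0 n) g.
Proof. intros Hfg; apply lsum_ext; intros i Hi; apply in_seq in Hi; apply Hfg; lia. Qed.

Lemma lsum_joint f l : Permutation l (seq 0 (2 * n)) ->
  lsum l f = lsum (seq 0 n) f + lsum (seq 0 n) (fun i => f (n + i)%nat).
Proof. intros Hl; rewrite (lsum_perm _ _ _ Hl); apply lsum_seq_double. Qed.

Lemma partition_energy_SW beta W :
  Defs.partition beta (2 * n) (energy_SW n E W) = (1 + exp (- beta * W)) * Defs.partition beta n E.
Proof.
  change (lsum (seq 0 (2 * n)) (boltz beta (energy_SW n E W))
          = (1 + exp (- beta * W)) * lsum (seq 0 n) (boltz beta E)).
  rewrite lsum_seq_double.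
  rewrite (lsum_seq_ext _ (boltz beta E)) by (intros; rewrite energy_SW_lo; auto).
  rewrite (lsum_ext _ (fun i => exp (- beta * energy_SW n E W (n + i)))
             (fun i => exp (- beta * W) * exp (- beta * E i)))
    by (intros; apply boltz_energy_SW_hi).
  rewrite lsum_scal; ring.
Qed.

Lemma lsum_tensor_bat0 x l : Permutation l (seq 0 (2 * n)) ->
  lsum l (tensor_bat0 n x) = lsum (seq 0 n) x.
Proof.
  intros Hl; rewrite (lsum_joint _ _ Hl).
  rewrite (lsum_seq_ext _ x) by (intros; apply tensor_bat0_lo; auto).
  rewrite (lsum_ext _ (fun i => tensor_bat0 n x (n + i)) (fun _ => 0))
    by (intros; apply tensor_bat0_hi).
  rewrite lsum_zero; ring.
Qed.

Lemma lsum_tensor_bat1 y l : Permutation l (seq 0 (2 * n)) ->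
  lsum l (tensor_bat1 n y) = lsum (seq 0 n) y.
Proof.
  intros Hl; rewrite (lsum_joint _ _ Hl).
  rewrite (lsum_seq_ext _ (fun _ => 0)) by (intros; apply tensor_bat1_lo; auto).
  rewrite (lsum_ext _ (fun i => tensor_bat1 n y (n + i)) y)
    by (intros; apply tensor_bat1_hi).
  rewrite lsum_zero; ring.
Qed.

Lemma support_weight_tensor_bat0 beta W x l : Permutation l (seq 0 (2 * n)) ->
  support_weight (tensor_bat0 n x) (boltz beta (energy_SW n E W)) l
  = support_weight x (boltz beta E) (seq 0 n).
Proof.
  intros Hl; unfold support_weight; rewrite (lsum_joint _ _ Hl).
  rewrite (lsum_seq_ext _ (fun i => if Req_EM_T (x i) 0 then 0 else exp (- beta * E i)))
    by (intros; rewrite tensor_bat0_lo, energy_SW_lo; auto).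
  rewrite (lsum_ext _ (fun i => if Req_EM_T (tensor_bat0 n x (n + i)) 0 then 0
                               else exp (- beta * energy_SW n E W (n + i))) (fun _ => 0))
    by (intros; rewrite tensor_bat0_hi; destruct Req_EM_T; [reflexivity | lra]).
  rewrite lsum_zero; ring.
Qed.

Lemma support_weight_tensor_bat1 beta W y l :
  (forall i, (i < n)%nat -> y i <> 0) -> Permutation l (seq 0 (2 * n)) ->
  support_weight (tensor_bat1 n y) (boltz beta (energy_SW n E W)) l
  = exp (- beta * W) * Defs.partition beta n E.
Proof.
  intros Hy Hl; unfold support_weight; rewrite (lsum_joint _ _ Hl).
  rewrite (lsum_seq_ext _ (fun _ => 0))
    by (intros; rewrite tensor_bat1_lo by auto; destruct Req_EM_T; [reflexivity | lra]).
  rewrite (lsum_seq_ext (fun i => if Req_EM_T (tensor_bat1 n y (n + i)) 0 then 0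
                                  else exp (- beta * energy_SW n E W (n + i)))
             (fun i => exp (- beta * W) * exp (- beta * E i))).
  - rewrite lsum_zero, lsum_scal, Rplus_0_l; reflexivity.
  - intros i Hi; rewrite tensor_bat1_hi, boltz_energy_SW_hi.
    destruct Req_EM_T; [exfalso; apply (Hy i); auto | reflexivity].
Qed.

End JointSystem.

Lemma partition_pos beta n E : (0 < n)%nat -> 0 < Defs.partition beta n E.
Proof.
  destruct n as [|n]; [lia|]; intros _.
  change (0 < lsum (seq 0 (S n)) (boltz beta E)); cbn [seq]; rewrite lsum_cons.
  pose proof (exp_pos (- beta * E 0%nat)).
  pose proof (lsum_nonneg (seq 1 n) (boltz beta E) (fun i _ => Rlt_le _ _ (exp_pos _))).
  lra.
Qed.

Lemma gibbs_pos beta n E i : 0 < Defs.partition beta n E -> 0 < gibbs beta n E i.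
Proof. intros HZ; apply Rdiv_lt_0_compat; [apply exp_pos | exact HZ]. Qed.

Lemma lsum_gibbs beta n E : 0 < Defs.partition beta n E -> lsum (seq 0 n) (gibbs beta n E) = 1.
Proof.
  intros HZ; unfold gibbs.
  rewrite (lsum_ext _ _ (fun i => / Defs.partition beta n E * exp (- beta * E i)))
    by (intros; unfold Rdiv; apply Rmult_comm).
  rewrite lsum_scal; change (/ lsum (seq 0 n) (boltz beta E) * lsum (seq 0 n) (boltz beta E) = 1).
  field; change (Defs.partition beta n E <> 0); lra.
Qed.

Lemma tensor_bat1_gibbs_le beta n E W j : 0 < Defs.partition beta n E ->
  tensor_bat1 n (gibbs beta n E) j
  <= exp (beta * W) / Defs.partition beta n E * exp (- beta * energy_SW n E W j).
Proof.
  intros HZ; unfold tensor_bat1, energy_SW; destruct (Nat.ltb j n).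
  - left; apply Rmult_lt_0_compat; [apply Rdiv_lt_0_compat; [apply exp_pos | exact HZ] | apply exp_pos].
  - right; unfold gibbs.
    replace (- beta * (E (j - n)%nat + W)) with (- beta * E (j - n)%nat + - (beta * W)) by ring.
    rewrite exp_plus, exp_Ropp; field; split; [apply Rgt_not_eq, exp_pos | lra].
Qed.

Section DeterministicWork.

Variables (beta : R) (n : nat) (E x : nat -> R).
Hypothesis hx : is_prob_vector n x.

Let Z := Defs.partition beta n E.
Let P := support_weight x (boltz beta E) (seq 0 n).

Lemma prob_vector_dim_pos : (0 < n)%nat.
Proof. destruct hx as [_ H1]; destruct n; [unfold Rsum_upto in H1; simpl in H1; lra | lia]. Qed.

Lemma partition_system_pos : 0 < Z.
Proof. apply partition_pos, prob_vector_dim_pos. Qed.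

Lemma support_weight_prob_vector_pos : 0 < P.
Proof.
  destruct hx as [hx0 hx1]; apply support_weight_pos_of_lsum_pos.
  - intros; apply exp_pos.
  - intros i Hi; apply in_seq in Hi; apply hx0; lia.
  - change (0 < Rsum_upto n x); lra.
Qed.

Lemma tensor_bat0_nonneg j : 0 <= tensor_bat0 n x j.
Proof.
  unfold tensor_bat0; destruct (Nat.ltb j n) eqn:Hj; [|lra].
  apply (proj1 hx), Nat.ltb_lt, Hj.
Qed.

Lemma tensor_bat1_gibbs_nonneg j : 0 <= tensor_bat1 n (gibbs beta n E) j.
Proof.
  unfold tensor_bat1; destruct (Nat.ltb j n); [lra|].
  apply Rlt_le, gibbs_pos, partition_system_pos.
Qed.

Lemma det_work_set_of_le W : P <= Z * exp (- beta * W) -> det_work_set beta n E x W.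
Proof.
  intros HPW lu lv Hlu Hlv t [Ht _].
  pose proof partition_system_pos as HZ; pose proof support_weight_prob_vector_pos as HP.
  set (c := exp (beta * W) / Z).
  assert (Hc : 0 < c) by (apply Rdiv_lt_0_compat; [apply exp_pos | exact HZ]).
  assert (HcP : c * P <= 1).
  { assert (Hexp : exp (beta * W) * exp (- beta * W) = 1).
    { rewrite <- exp_plus; replace (beta * W + - beta * W) with 0 by ring; apply exp_0. }
    assert (c * (Z * exp (- beta * W)) = 1) by (unfold c; rewrite <- Hexp; field; lra).
    nra. }
  assert (Hv_line : thermo_curve beta (energy_SW n E W) (tensor_bat1 n (gibbs beta n E)) lv t <= c * t).
  { apply thermo_curve_le_mul; [lra | | exact Ht].
    intros j _; apply tensor_bat1_gibbs_le, HZ. }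
  assert (Hv_total : thermo_curve beta (energy_SW n E W) (tensor_bat1 n (gibbs beta n E)) lv t <= 1).
  { rewrite <- (lsum_gibbs beta n E HZ), <- (lsum_tensor_bat1 n _ lv (proj1 Hlv)).
    apply thermo_curve_le_lsum; auto using tensor_bat1_gibbs_nonneg. }
  pose proof (beta_ordering_strongly_sorted _ _ _ _ _ Hlu) as Hsorted.
  pose proof (lsum_tensor_bat0 n x lu (proj1 Hlu)) as Hsum.
  change (lsum (seq 0 n) x) with (Rsum_upto n x) in Hsum; rewrite (proj2 hx) in Hsum.
  pose proof (support_weight_tensor_bat0 n E beta W x lu (proj1 Hlu)) as Hsupp; fold P in Hsupp.
  destruct (Rle_dec t P) as [h|h].
  - pose proof (thermo_curve_ge_chord beta (energy_SW n E W) (tensor_bat0 n x) lu Hsorted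
                  (fun j _ => tensor_bat0_nonneg j) t Ht) as Hchord.
    rewrite Hsum, Hsupp in Hchord; specialize (Hchord h); nra.
  - pose proof (thermo_curve_ge_lsum beta (energy_SW n E W) (tensor_bat0 n x) lu Hsorted
                  (fun j _ => tensor_bat0_nonneg j) t Ht) as Hflat.
    rewrite Hsum, Hsupp in Hflat; specialize (Hflat ltac:(lra)); lra.
Qed.

Lemma le_of_det_work_set W : det_work_set beta n E x W -> P <= Z * exp (- beta * W).
Proof.
  intros HW; apply Rnot_lt_le; intros Hlt.
  pose proof partition_system_pos as HZ.
  pose proof (exp_pos (- beta * W)) as HeW.
  destruct (beta_ordering_exists beta (2 * n) (energy_SW n E W) (tensor_bat0 n x)) as [lu Hlu].
  destruct (beta_ordering_exists beta (2 * n) (energy_SW n E W) (tensor_bat1 n (gibbs beta n E)))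
    as [lv Hlv].
  set (t0 := Z * exp (- beta * W)) in *.
  assert (Ht0 : 0 <= t0) by (apply Rlt_le, Rmult_lt_0_compat; assumption).
  specialize (HW lu lv Hlu Hlv t0).
  rewrite partition_energy_SW in HW; specialize (HW ltac:(fold Z; unfold t0; nra)).
  assert (Hu : thermo_curve beta (energy_SW n E W) (tensor_bat0 n x) lu t0 < 1).
  { rewrite <- (proj2 hx); change (Rsum_upto n x) with (lsum (seq 0 n) x).
    rewrite <- (lsum_tensor_bat0 n x lu (proj1 Hlu)).
    apply thermo_curve_lt_lsum; auto using tensor_bat0_nonneg.
    rewrite (support_weight_tensor_bat0 n E beta W x lu (proj1 Hlu)); exact Hlt. }
  assert (Hv : 1 <= thermo_curve beta (energy_SW n E W) (tensor_bat1 n (gibbs beta n E)) lv t0).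
  { rewrite <- (lsum_gibbs beta n E HZ), <- (lsum_tensor_bat1 n _ lv (proj1 Hlv)).
    apply thermo_curve_ge_lsum; auto using tensor_bat1_gibbs_nonneg.
    - apply (beta_ordering_strongly_sorted _ _ _ _ _ Hlv).
    - rewrite (support_weight_tensor_bat1 n E beta W _ lv); [unfold t0; fold Z; lra | | exact (proj1 Hlv)].
      intros i _; apply Rgt_not_eq, gibbs_pos, HZ. }
  lra.
Qed.

Lemma det_work_set_iff W : det_work_set beta n E x W <-> P <= Z * exp (- beta * W).
Proof. split; [apply le_of_det_work_set | apply det_work_set_of_le]. Qed.

Lemma sum_gibbs_on_support :
  Rsum_upto n (fun i => if Req_EM_T (x i) 0 then 0 else gibbs beta n E i) = P / Z.
Proof.
  pose proof partition_system_pos as HZ.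
  change (lsum (seq 0 n) (fun i => if Req_EM_T (x i) 0 then 0 else gibbs beta n E i) = P / Z).
  rewrite (lsum_ext _ _ (fun i => / Z * (if Req_EM_T (x i) 0 then 0 else exp (- beta * E i)))).
  - rewrite lsum_scal; unfold P, support_weight; field; lra.
  - intros i _; unfold gibbs; fold Z; destruct Req_EM_T; field; lra.
Qed.

End DeterministicWork.

Theorem mainTheorem8 (n : nat) (E : nat -> R) (beta : R) (x : nat -> R)
  (hbeta : 0 < beta) (hx : is_prob_vector n x) :
  let Wdet := - (1 / beta) *
      ln (Rsum_upto n (fun i => if Req_EM_T (x i) 0 then 0 else gibbs beta n E i)) in
  is_lub (det_work_set beta n E x) Wdet /\ det_work_set beta n E x Wdet.
Proof.
  intros Wdet.
  pose proof (partition_system_pos beta n E x hx) as HZ.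
  pose proof (support_weight_prob_vector_pos beta n E x hx) as HP.
  set (Z := Defs.partition beta n E) in *.
  set (P := support_weight x (boltz beta E) (seq 0 n)) in *.
  assert (HWdet : Z * exp (- beta * Wdet) = P).
  { unfold Wdet; rewrite (sum_gibbs_on_support beta n E x hx); fold Z P.
    replace (- beta * (- (1 / beta) * ln (P / Z))) with (ln (P / Z)) by (field; lra).
    rewrite exp_ln by (apply Rdiv_lt_0_compat; assumption); field; lra. }
  assert (Hdet : det_work_set beta n E x Wdet) by (apply (det_work_set_iff beta n E x hx); fold Z P; lra).
  split; [split | exact Hdet].
  - intros W HW; apply (det_work_set_iff beta n E x hx) in HW; fold Z P in HW.
    apply Rnot_lt_le; intros Hlt.
    assert (exp (- beta * W) < exp (- beta * Wdet)) by (apply exp_increasing; nra).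
    nra.
  - intros b Hb; apply Hb, Hdet.
Qed.
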